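(* Let $K\subset\mathbb{R}^3$ be a convex body with $K=-K$ and $\mathrm{r}_2(K)>0$. Then \[ \frac{\widetilde{\mathrm{r}}_2(K)}{\mathrm{r}_2(K)}\leq\frac{2}{\sqrt{3}}. \] Moreover, the inequality is best possible: there exists such a $K$ for which equality holds.
   Context: A convex body is a compact convex subset of $\mathbb{R}^3$. For a set $C$ contained in an affine subspace $A$, $\mathrm{r}(C;A)$ denotes the Euclidean inradius of $C$ measured within $A$. $\mathcal{L}^3_2$ is the set of 2-dimensional linear subspaces, $K|L$ the orthogonal projection onto $L$. Define $\mathrm{r}_2(K)=\max_{L\in\mathcal{L}^3_2}\max_{x\in L^\perp}\mathrm{r}(K\cap(x+L);x+L)$ (largest radius of a planar disc contained in $K$) and $\widetilde{\mathrm{r}}_2(K)=\max_{L\in\mathcal{L}^3_2}\mathrm{r}(K|L;L)$. *)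

From HB Require Import structures.
From mathcomp Require Import all_boot all_order all_algebra.
From mathcomp Require Import all_classical all_reals all_analysis.
Set Implicit Arguments. Unset Strict Implicit. Unset Printing Implicit Defensive.
Import Order.TTheory GRing.Theory Num.Theory.
Import numFieldNormedType.Exports.
Local Open Scope ring_scope.
Local Open Scope classical_set_scope.

Definition dot3 {R : realType} (u v : 'rV[R]_3) : R := \sum_(i < 3) u 0 i * v 0 i.

(* (u, v) is an orthonormal basis of a 2-dimensional linear subspace L of R^3;
   every L in L^3_2 arises this way. *)
Definition orthonormal2 {R : realType} (u v : 'rV[R]_3) : Prop :=
  dot3 u u = 1 /\ dot3 v v = 1 /\ dot3 u v = 0.

Definition convex3 {R : realType} (K : set 'rV[R]_3) : Prop :=
  forall x y, K x -> K y -> forall t : R, 0 <= t <= 1 -> K (t *: x + (1 - t) *: y).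

Definition convex_body {R : realType} (K : set 'rV[R]_3) : Prop :=
  compact K /\ convex3 K.

Definition origin_symmetric {R : realType} (K : set 'rV[R]_3) : Prop :=
  K = [set - x | x in K].

Definition section_disc_radii {R : realType} (K : set 'rV[R]_3) : set R :=
  [set r | 0 <= r /\ exists u v c : 'rV[R]_3, orthonormal2 u v /\
     forall a b : R, a ^+ 2 + b ^+ 2 <= r ^+ 2 -> K (c + a *: u + b *: v)].

(* r_2(K) = max_L max_{x in L^perp} r(K cap (x+L); x+L)
          = sup of radii of planar discs contained in K. *)
Definition r2 {R : realType} (K : set 'rV[R]_3) : R := sup (section_disc_radii K).

(* radii r of discs in L = span(u,v) contained in the orthogonal projection K|L;
   the disc is centered at p u + q v, and a point a u + b v of L lies in K|L iff
   some x in K has (x.u, x.v) = (a, b). *)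
Definition projection_disc_radii {R : realType} (K : set 'rV[R]_3) : set R :=
  [set r | 0 <= r /\ exists u v : 'rV[R]_3, orthonormal2 u v /\
     exists p q : R, forall a b : R, (a - p) ^+ 2 + (b - q) ^+ 2 <= r ^+ 2 ->
       exists x, K x /\ dot3 x u = a /\ dot3 x v = b].

(* tilde r_2(K) = max_L r(K|L; L) *)
Definition rt2 {R : realType} (K : set 'rV[R]_3) : R := sup (projection_disc_radii K).

From HB Require Import structures.
From mathcomp Require Import all_boot all_order all_algebra.
From mathcomp Require Import all_classical all_reals all_analysis.
From mathcomp Require Import ring lra.
Set Implicit Arguments. Unset Strict Implicit. Unset Printing Implicit Defensive.
Import Order.TTheory GRing.Theory Num.Theory.
Import numFieldNormedType.Exports.
Local Open Scope ring_scope.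
Local Open Scope classical_set_scope.

(* If the projection of K onto a plane contains a disc of radius r, it also
   contains the centred one, since K = -K.  Over each point w of that disc the
   fibre of K is a segment; its upper end is a concave, hence continuous,
   function of w, and its midpoint fibre_mid w is odd in w.  Fix rho < r and
   let T be the rotation by 2 pi / 3.  Turning the equilateral triangle
   w, T w, T^2 w on the circle of radius rho by pi / 3 changes the sign of
   fibre_mid w + fibre_mid (T w) + fibre_mid (T^2 w), so for some w this sum
   vanishes.  The points q0, q2 of K above w, T w at the midpoint heights then
   satisfy - (q0 + q2) in K, so K contains the hexagon with vertices +-q0,
   +-q2, +-(q0 + q2).  This hexagon lies in a plane through 0 and projects
   onto the regular hexagon of circumradius rho, whose inscribed disc has
   radius rho sqrt 3 / 2; as projection does not increase lengths, K contains
   a planar disc of that radius.  Equality holds for the cube [-1, 1]^3: its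
   largest planar disc has radius sqrt (3/2) and lies in the plane
   x + y + z = 0, onto which the cube projects to a hexagon of inradius
   sqrt 2. *)

Lemma half_itv01 (R : realFieldType) : 0 <= (1 / 2 : R) <= 1.
Proof. by rewrite divr_ge0 //= ler_pdivrMr // mul1r ler1n. Qed.

(** * Coordinates in R^3 *)

Section Space.
Variable R : realType.
Local Notation V := 'rV[R]_3.
Implicit Types (x y z : V) (a b : R).

Definition i0 : 'I_3 := @Ordinal 3 0 isT.
Definition i1 : 'I_3 := @Ordinal 3 1 isT.
Definition i2 : 'I_3 := @Ordinal 3 2 isT.

Lemma ord3P (P : 'I_3 -> Prop) : P i0 -> P i1 -> P i2 -> forall j, P j.
Proof.
move=> P0 P1 P2 [[|[|[|j]]] lt_j3] //.
- by rewrite (_ : Ordinal _ = i0) //; apply: val_inj.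
- by rewrite (_ : Ordinal _ = i1) //; apply: val_inj.
- by rewrite (_ : Ordinal _ = i2) //; apply: val_inj.
Qed.

Definition row3 a b (c : R) : V := \row_j [:: a; b; c]`_j.

Lemma dot3E x y : dot3 x y = x 0 i0 * y 0 i0 + x 0 i1 * y 0 i1 + x 0 i2 * y 0 i2.
Proof.
rewrite /dot3 !big_ord_recl big_ord0 addr0 addrA.
by congr (_ * _ + _ * _ + _ * _); congr (_ _ _); apply: val_inj.
Qed.

Lemma dot3C x y : dot3 x y = dot3 y x.
Proof. by rewrite !dot3E; ring. Qed.

Lemma dot3Dl x y z : dot3 (x + y) z = dot3 x z + dot3 y z.
Proof. by rewrite !dot3E !mxE; ring. Qed.

Lemma dot3Zl a x z : dot3 (a *: x) z = a * dot3 x z.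
Proof. by rewrite !dot3E !mxE; ring. Qed.

Lemma dot3Nl x z : dot3 (- x) z = - dot3 x z.
Proof. by rewrite !dot3E !mxE; ring. Qed.

Lemma dot3Bl x y z : dot3 (x - y) z = dot3 x z - dot3 y z.
Proof. by rewrite dot3Dl dot3Nl. Qed.

Lemma dot3Dr x y z : dot3 x (y + z) = dot3 x y + dot3 x z.
Proof. by rewrite dot3C dot3Dl !(dot3C _ x). Qed.

Lemma dot3Zr a x z : dot3 x (a *: z) = a * dot3 x z.
Proof. by rewrite dot3C dot3Zl dot3C. Qed.

Lemma dot3_ge0 x : 0 <= dot3 x x.
Proof. by rewrite dot3E; nra. Qed.

Lemma dot3_eq0 x : dot3 x x = 0 -> x = 0.
Proof.
rewrite dot3E => x0; apply/rowP; apply: ord3P; rewrite mxE;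
  apply/eqP; rewrite -sqrf_eq0; apply/eqP; nra.
Qed.

Lemma dot3_comb a b x y : dot3 (a *: x + b *: y) (a *: x + b *: y) =
  a ^+ 2 * dot3 x x + 2 * a * b * dot3 x y + b ^+ 2 * dot3 y y.
Proof. by rewrite !dot3Dl !dot3Dr !dot3Zl !dot3Zr (dot3C y x); ring. Qed.

Definition cross x y : V := row3 (x 0 i1 * y 0 i2 - x 0 i2 * y 0 i1)
  (x 0 i2 * y 0 i0 - x 0 i0 * y 0 i2) (x 0 i0 * y 0 i1 - x 0 i1 * y 0 i0).

Lemma dot3_cross_l x y : dot3 (cross x y) x = 0.
Proof. by rewrite dot3E !mxE /=; ring. Qed.

Lemma dot3_cross_r x y : dot3 (cross x y) y = 0.
Proof. by rewrite dot3E !mxE /=; ring. Qed.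

Lemma dot3_cross x y :
  dot3 (cross x y) (cross x y) = dot3 x x * dot3 y y - dot3 x y ^+ 2.
Proof. by rewrite !dot3E !mxE /=; ring. Qed.

(* The right-hand side is the Gram determinant of x, y, z. *)
Lemma dot3_cross_sqr x y z : dot3 z (cross x y) ^+ 2 =
  dot3 z z * dot3 x x * dot3 y y + 2 * dot3 z x * dot3 x y * dot3 y z
  - dot3 z z * dot3 x y ^+ 2 - dot3 x x * dot3 z y ^+ 2 - dot3 y y * dot3 z x ^+ 2.
Proof. by rewrite !dot3E !mxE /=; ring. Qed.

Lemma gram_schmidt2 x y : 0 < dot3 x x -> 0 < dot3 x x * dot3 y y - dot3 x y ^+ 2 ->
  exists u v, orthonormal2 u v /\ forall a b, exists c d, a *: u + b *: v = c *: x + d *: y.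
Proof.
set gxx := dot3 x x; set gxy := dot3 x y; set gyy := dot3 y y; set D := _ - _ => gxx0 D0.
have gD0 : 0 < gxx * D by rewrite mulr_gt0.
set k := (Num.sqrt gxx)^-1; set k' := (Num.sqrt (gxx * D))^-1.
have k2 : k ^+ 2 * gxx = 1 by rewrite exprVn sqr_sqrtr ?ltW // mulVf ?gt_eqF.
have k'2 : k' ^+ 2 * (gxx * D) = 1 by rewrite exprVn sqr_sqrtr ?ltW // mulVf ?gt_eqF.
set z := gxx *: y - gxy *: x.
have zz : dot3 z z = gxx * D by rewrite /z /D /gxx /gxy /gyy !dot3E !mxE; ring.
have xz : dot3 x z = 0 by rewrite /z /gxx /gxy !dot3E !mxE; ring.
exists (k *: x), (k' *: z); split; first split; [|split|].
- by rewrite dot3Zl dot3Zr mulrA -expr2.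
- by rewrite dot3Zl dot3Zr zz mulrA -expr2.
- by rewrite dot3Zl dot3Zr xz !mulr0.
move=> a b; exists (a * k - b * k' * gxy), (b * k' * gxx).
by apply/rowP => i; rewrite !mxE; ring.
Qed.

Section Frame.
Variables u v : V.
Hypothesis uv : orthonormal2 u v.

Lemma orthonormal2_cross : dot3 (cross u v) (cross u v) = 1.
Proof. by case: uv => uu [vv uv0]; rewrite dot3_cross uu vv uv0; ring. Qed.

Lemma orthonormal2_parseval x :
  dot3 x x = dot3 x u ^+ 2 + dot3 x v ^+ 2 + dot3 x (cross u v) ^+ 2.
Proof.
by case: uv => uu [vv uv0]; rewrite dot3_cross_sqr uu vv uv0 (dot3C v x); ring.
Qed.

Lemma orthonormal2_decomp x :
  x = dot3 x u *: u + dot3 x v *: v + dot3 x (cross u v) *: cross u v.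
Proof.
case: uv => uu [vv uv0]; apply/eqP; rewrite -subr_eq0; apply/eqP/dot3_eq0.
set y := _ - _; have ee := orthonormal2_cross.
have eu := dot3_cross_l u v; have ev := dot3_cross_r u v.
rewrite orthonormal2_parseval /y !dot3Bl !dot3Dl !dot3Zl uu vv ee eu ev
  (dot3C v u) uv0 (dot3C u) (dot3C v) eu ev.
by ring.
Qed.

End Frame.
End Space.

(** * The Euclidean plane *)

Section Plane.
Variable R : realType.
Implicit Types (w : R * R) (a b c d : R).

Definition normsq w := w.1 ^+ 2 + w.2 ^+ 2.

Lemma normsq_ge0 w : 0 <= normsq w.
Proof. by rewrite addr_ge0 ?sqr_ge0. Qed.

Lemma normsqN w : normsq (- w) = normsq w.
Proof. by rewrite /normsq /= !sqrrN. Qed.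

Lemma scale_pairE a w : a *: w = (a * w.1, a * w.2).
Proof. by []. Qed.

Lemma add_pairE w w' : w + w' = (w.1 + w'.1, w.2 + w'.2).
Proof. by []. Qed.

Lemma opp_pairE w : - w = (- w.1, - w.2).
Proof. by []. Qed.

Lemma normsqZ a w : normsq (a *: w) = a ^+ 2 * normsq w.
Proof. by rewrite /normsq scale_pairE /=; ring. Qed.

Lemma normsq_eq0 w : normsq w = 0 -> w = 0.
Proof.
case: w => a b; rewrite /normsq /= => ab0.
have a0 : a ^+ 2 = 0 by apply/eqP; rewrite eq_le sqr_ge0 andbT; nra.
have b0 : b ^+ 2 = 0 by apply/eqP; rewrite eq_le sqr_ge0 andbT; nra.
by move/eqP: a0; move/eqP: b0; rewrite !sqrf_eq0 => /eqP -> /eqP ->.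
Qed.

Lemma cauchy_schwarz2 a b c d :
  (a * c + b * d) ^+ 2 <= (a ^+ 2 + b ^+ 2) * (c ^+ 2 + d ^+ 2).
Proof.
have -> : (a ^+ 2 + b ^+ 2) * (c ^+ 2 + d ^+ 2) = (a * c + b * d) ^+ 2 + (a * d - b * c) ^+ 2.
  by ring.
by rewrite lerDl sqr_ge0.
Qed.

Lemma exists_unit_orthogonal a b : exists c d, c ^+ 2 + d ^+ 2 = 1 /\ c * a + d * b = 0.
Proof.
have [ab0 | ab_neq0] := eqVneq (normsq (a, b)) 0.
  have := normsq_eq0 ab0; rewrite (_ : 0 = (0, 0)) // => -[-> ->].
  by exists 1, 0; split; [rewrite expr1n expr0n /= addr0 | rewrite !mulr0 addr0].
have ab_gt0 : 0 < normsq (a, b) by rewrite lt_def ab_neq0 normsq_ge0.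
set n := Num.sqrt (normsq (a, b)); have n_gt0 : 0 < n by rewrite sqrtr_gt0.
exists (b / n), (- (a / n)); split; last by ring.
by rewrite sqrrN !expr_div_n -mulrDl sqr_sqrtr ?normsq_ge0 // addrC mulfV.
Qed.

Definition enorm w := Num.sqrt (normsq w).

Lemma enorm_ge0 w : 0 <= enorm w.
Proof. exact: sqrtr_ge0. Qed.

Lemma enorm_sqr w : enorm w ^+ 2 = normsq w.
Proof. by rewrite sqr_sqrtr // normsq_ge0. Qed.

Lemma enorm_le w r : 0 <= r -> (enorm w <= r) = (normsq w <= r ^+ 2).
Proof. by move=> r0; rewrite -enorm_sqr ler_pXn2r ?nnegrE ?enorm_ge0. Qed.

Lemma enormZ a w : enorm (a *: w) = `|a| * enorm w.
Proof. by rewrite /enorm normsqZ sqrtrM ?sqr_ge0 // sqrtr_sqr. Qed.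

Lemma enorm0 : enorm 0 = 0.
Proof. by rewrite /enorm /normsq /= expr0n /= addr0 sqrtr0. Qed.

Lemma enormN w : enorm (- w) = enorm w.
Proof. by rewrite /enorm normsqN. Qed.

Lemma enormD w w' : enorm (w + w') <= enorm w + enorm w'.
Proof.
rewrite enorm_le ?addr_ge0 ?enorm_ge0 //.
have ee0 := mulr_ge0 (enorm_ge0 w) (enorm_ge0 w').
have cs := cauchy_schwarz2 w.1 w.2 w'.1 w'.2.
rewrite -!/(normsq _) -!enorm_sqr -exprMn in cs.
have dot_le : w.1 * w'.1 + w.2 * w'.2 <= enorm w * enorm w' by nra.
have -> : normsq (w + w') = normsq w + normsq w' + 2 * (w.1 * w'.1 + w.2 * w'.2).
  by rewrite /normsq /=; ring.
by rewrite -!enorm_sqr; lra.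
Qed.

Lemma normsq_continuous : continuous normsq.
Proof.
move=> w; apply: cvgD; apply: cvgM.
- exact: cvg_fst.
- exact: cvg_fst.
- exact: cvg_snd.
- exact: cvg_snd.
Qed.

Lemma enorm_continuous : continuous enorm.
Proof.
by move=> w; apply: continuous_comp; [exact: normsq_continuous | exact: sqrt_continuous].
Qed.

Definition s3 : R := Num.sqrt 3.

Lemma s3_gt0 : 0 < s3.
Proof. by rewrite sqrtr_gt0. Qed.

Lemma s3_sqr : s3 ^+ 2 = 3.
Proof. by rewrite sqr_sqrtr. Qed.

Lemma s3_sqrM a : s3 ^+ 2 * a = 3 * a.
Proof. by rewrite s3_sqr. Qed.

Definition rot120 w : R * R := (- w.1 / 2 - s3 / 2 * w.2, s3 / 2 * w.1 - w.2 / 2).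

Lemma rot120N w : rot120 (- w) = - rot120 w.
Proof. by rewrite !opp_pairE /rot120 /=; congr (_, _); ring. Qed.

Lemma rot120_rot120 w :
  rot120 (rot120 w) = (- w.1 / 2 + s3 / 2 * w.2, - (s3 / 2 * w.1) - w.2 / 2).
Proof.
rewrite /rot120 /=; congr (_, _); have := s3_sqrM w.1; have := s3_sqrM w.2; lra.
Qed.

Lemma rot120K w : rot120 (rot120 (rot120 w)) = w.
Proof.
case: w => a b; rewrite rot120_rot120 /rot120 /=.
by congr (_, _); have := s3_sqrM a; have := s3_sqrM b; lra.
Qed.

Lemma rot120_sum w : w + rot120 w + rot120 (rot120 w) = 0.
Proof.
rewrite rot120_rot120 /rot120 !add_pairE (_ : 0 = (0, 0)) //=.
by congr (_, _); lra.
Qed.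

Lemma normsq_rot120_comb a b w :
  normsq (a *: w + b *: rot120 w) = (a ^+ 2 - a * b + b ^+ 2) * normsq w.
Proof.
transitivity ((a ^+ 2 - a * b + b ^+ 2 * (1 + s3 ^+ 2) / 4) * normsq w).
  by rewrite /normsq /rot120 !scale_pairE add_pairE /=; field.
by rewrite s3_sqr; field.
Qed.

Lemma normsq_rot120 w : normsq (rot120 w) = normsq w.
Proof.
have := normsq_rot120_comb 0 1 w.
by rewrite scale0r add0r scale1r; move=> ->; ring.
Qed.

Lemma rot120_continuous : continuous rot120.
Proof.
have fstc : continuous (@fst R R) by move=> w; exact: cvg_fst.
have sndc : continuous (@snd R R) by move=> w; exact: cvg_snd.
have c1 : continuous (fun w : R * R => - w.1 / 2 - s3 / 2 * w.2).
  move=> w; apply: cvgB; apply: cvgM; try exact: cvg_cst.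
  - by apply: cvgN; exact: fstc.
  - exact: sndc.
have c2 : continuous (fun w : R * R => s3 / 2 * w.1 - w.2 / 2).
  move=> w; apply: cvgB; apply: cvgM; try exact: cvg_cst.
  - exact: fstc.
  - exact: sndc.
by move=> w; exact: (cvg_pair (c1 w) (c2 w)).
Qed.

Definition circle rho t : R * R :=
  (rho * (1 - t ^+ 2) / (1 + t ^+ 2), rho * (2 * t) / (1 + t ^+ 2)).

Lemma normsq_circle rho t : normsq (circle rho t) = rho ^+ 2.
Proof. by rewrite /normsq /=; field; rewrite lt0r_neq0 // ltr_pwDl ?sqr_ge0. Qed.

Lemma circle_continuous rho : continuous (circle rho).
Proof.
have den_ne0 t : 1 + t ^+ 2 != 0 :> R by rewrite lt0r_neq0 // ltr_pwDl ?sqr_ge0.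
have denc : continuous (fun t : R => (1 + t ^+ 2)^-1).
  by move=> t; apply: cvgV => //; apply: cvgD; [exact: cvg_cst | exact: cvgM cvg_id cvg_id].
have c1 : continuous (fun t : R => rho * (1 - t ^+ 2) / (1 + t ^+ 2)).
  move=> t; apply: cvgM; last exact: denc.
  by apply: cvgM; [exact: cvg_cst | apply: cvgB; [exact: cvg_cst | exact: cvgM cvg_id cvg_id]].
have c2 : continuous (fun t : R => rho * (2 * t) / (1 + t ^+ 2)).
  move=> t; apply: cvgM; last exact: denc.
  by apply: cvgM; [exact: cvg_cst | apply: cvgM; [exact: cvg_cst | exact: cvg_id]].
by move=> t; exact: (cvg_pair (c1 t) (c2 t)).
Qed.

Lemma circle0 rho : circle rho 0 = (rho, 0).
Proof. by rewrite /circle /=; congr (_, _); field. Qed.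

Lemma circle_s3 rho : circle rho (s3 / 3) = - rot120 (rot120 (rho, 0)).
Proof.
have s3_3 : (s3 / 3) ^+ 2 = 1 / 3 by rewrite expr_div_n s3_sqr; field.
by rewrite rot120_rot120 opp_pairE /circle s3_3 /=; congr (_, _); field.
Qed.
End Plane.
Arguments s3 {R}.

(** * Concave functions on a disc and fibres over it *)

Section ConcaveOnDisc.
Variable R : realType.
Variables (f : R * R -> R) (r M : R).
Hypothesis f_concave : forall w w' l,
  normsq w <= r ^+ 2 -> normsq w' <= r ^+ 2 -> 0 <= l <= 1 ->
  l * f w + (1 - l) * f w' <= f (l *: w + (1 - l) *: w').
Hypothesis f_bounded : forall w, normsq w <= r ^+ 2 -> `|f w| <= M.

Lemma concave_disc_bound_ge0 : 0 <= M.
Proof.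
apply: le_trans (normr_ge0 (f 0)) (f_bounded _).
by rewrite /normsq /= expr0n /= addr0 sqr_ge0.
Qed.

(* Extend the segment from w' through w by r - rho beyond w; concavity along
   it bounds the slope of f by the oscillation 2M over the length r - rho. *)
Lemma concave_disc_lipschitz rho w w' : 0 <= rho < r ->
  enorm w <= rho -> enorm w' <= rho -> f w' - f w <= 2 * M / (r - rho) * enorm (w - w').
Proof.
move=> /andP [rho0 rho_r] w_rho w'_rho; set s := r - rho; set d := enorm (w - w').
have s0 : 0 < s by rewrite subr_gt0.
have [d0 | d_neq0] := eqVneq d 0.
  have /subr0_eq -> : w - w' = 0 by apply: normsq_eq0; rewrite -enorm_sqr -/d d0 expr0n.
  by rewrite subrr d0 mulr0.
have d_gt0 : 0 < d by rewrite lt_def d_neq0 enorm_ge0.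
have disc_le w1 : enorm w1 <= r -> normsq w1 <= r ^+ 2.
  by rewrite enorm_le // ltW ?(le_lt_trans rho0).
have w_disc := disc_le _ (le_trans w_rho (ltW rho_r)).
have w'_disc := disc_le _ (le_trans w'_rho (ltW rho_r)).
have M0 := concave_disc_bound_ge0.
set p := w + (s / d) *: (w - w').
have p_disc : enorm p <= r.
  apply: le_trans (enormD _ _) _; rewrite enormZ -/d ger0_norm; last by rewrite divr_ge0 ?ltW.
  by rewrite mulfVK // /s; lra.
have ds_gt0 : 0 < d + s by rewrite addr_gt0.
set l := d / (d + s).
have l01 : 0 <= l <= 1 by rewrite divr_ge0 ?ler_pdivrMr ?mul1r; lra.
have w_comb : l *: p + (1 - l) *: w' = w.
  rewrite /p /l [RHS]surjective_pairing !scale_pairE !add_pairE opp_pairE /=.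
  by congr (_, _); field; rewrite lt0r_neq0 // d_neq0.
have := f_concave (disc_le _ p_disc) w'_disc l01; rewrite w_comb.
have := f_bounded (disc_le _ p_disc); have := f_bounded w'_disc.
rewrite !ler_norml => /andP [? ?] /andP [? ?] f_conc.
have l_le : l <= d / s.
  by rewrite /l ler_pM2l // lef_pV2 ?posrE //; lra.
have -> : 2 * M / s * d = d / s * (2 * M) by ring.
have : l * (f w' - f p) <= l * (2 * M) by rewrite ler_wpM2l //; [case/andP: l01 | lra].
have : l * (2 * M) <= d / s * (2 * M) by rewrite ler_wpM2r //; lra.
lra.
Qed.

Lemma concave_disc_continuous w : enorm w < r -> {for w, continuous f}.
Proof.
move=> w_r; set rho := (enorm w + r) / 2; set L := 2 * M / (r - rho).
have rho_r : 0 <= rho < r by apply/andP; split; have := enorm_ge0 w; rewrite /rho; lra.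
have L0 : 0 <= L.
  have M0 := concave_disc_bound_ge0.
  by rewrite /L divr_ge0 ?mulr_ge0 // subr_ge0 ltW //; case/andP: rho_r.
have near_rho : \forall w' \near w, enorm w' < rho.
  by apply: (cvgr_lt _ (@enorm_continuous _ w)); rewrite /rho; lra.
apply/cvgrPdist_lt => eps eps0.
have near_w : \forall w' \near w, enorm (w - w') < eps / (L + 1).
  have dist_cont : (fun w' => enorm (w - w')) @ w --> enorm (w - w).
    apply: continuous_comp; last exact: enorm_continuous.
    by apply: cvgB; [exact: cvg_cst | exact: cvg_id].
  by apply: (cvgr_lt _ dist_cont); rewrite subrr enorm0 divr_gt0 //; lra.
near=> w'.
have w'_rho : enorm w' <= rho by apply: ltW; near: w'.
have dist_lt : enorm (w - w') < eps / (L + 1) by near: w'.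
have w_rho : enorm w <= rho by rewrite /rho; lra.
have lip1 := concave_disc_lipschitz rho_r w_rho w'_rho.
have lip2 := concave_disc_lipschitz rho_r w'_rho w_rho.
rewrite -/L in lip1 lip2; rewrite -enormN opprB in lip2.
have : L * enorm (w - w') <= L * (eps / (L + 1)) by rewrite ler_wpM2l // ltW.
have : L * (eps / (L + 1)) < eps.
  rewrite mulrCA gtr_pMr // ltr_pdivrMr ?mul1r; lra.
by rewrite ltr_norml; lra.
Unshelve. all: by end_near.
Qed.
End ConcaveOnDisc.

Lemma ivt_opp_ends (R : realType) (g : R -> R) (a b : R) : a <= b ->
  {within `[a, b], continuous g} -> g b = - g a -> exists2 c, c \in `[a, b]%R & g c = 0.
Proof.
move=> ab gc gba; apply: (IVT ab gc); rewrite gba.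
by case: (lerP 0 (g a)) => g0; rewrite ge_min le_max; apply/andP; split; apply/orP; lra.
Qed.

Section Fibre.
Variable R : realType.
Variable G : R * R -> R -> Prop.
Variables (r M : R).
Hypothesis G_convex : forall w w' t t' l, G w t -> G w' t' -> 0 <= l <= 1 ->
  G (l *: w + (1 - l) *: w') (l * t + (1 - l) * t').
Hypothesis G_sym : forall w t, G w t -> G (- w) (- t).
Hypothesis G_bounded : forall w t, G w t -> `|t| <= M.
Hypothesis G_closed : forall w, closed [set t | G w t].
Hypothesis G_proj : forall w, normsq w <= r ^+ 2 -> exists t, G w t.

Definition fibre_top w := sup [set t | G w t].

Lemma fibre_has_sup w t : G w t -> has_sup [set t | G w t].
Proof.
move=> Gwt; split; first by exists t.
by exists M => s /G_bounded /(le_trans (ler_norm _)).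
Qed.

Lemma fibre_top_ub w t : G w t -> t <= fibre_top w.
Proof. by move=> Gwt; apply: sup_upper_bound (fibre_has_sup Gwt) _ Gwt. Qed.

Lemma G_fibre_top w : normsq w <= r ^+ 2 -> G w (fibre_top w).
Proof.
move=> /G_proj [t /fibre_has_sup [ne ub]].
by have := closure_sup ne ub; rewrite -(closure_id _).1.
Qed.

Lemma fibre_top_bounded w : normsq w <= r ^+ 2 -> `|fibre_top w| <= M.
Proof. by move=> /G_fibre_top /G_bounded. Qed.

Lemma fibre_top_concave w w' l : normsq w <= r ^+ 2 -> normsq w' <= r ^+ 2 -> 0 <= l <= 1 ->
  l * fibre_top w + (1 - l) * fibre_top w' <= fibre_top (l *: w + (1 - l) *: w').
Proof. by move=> w_r w'_r l01; apply/fibre_top_ub/G_convex => //; apply: G_fibre_top. Qed.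

(* By symmetry the fibre over w is the segment from - fibre_top (- w) to
   fibre_top w; fibre_mid w is its midpoint. *)
Definition fibre_mid w := (fibre_top w - fibre_top (- w)) / 2.

Lemma fibre_midN w : fibre_mid (- w) = - fibre_mid w.
Proof. by rewrite /fibre_mid opprK; field. Qed.

Lemma G_fibre_mid w : normsq w <= r ^+ 2 -> G w (fibre_mid w).
Proof.
move=> w_r; have G_low : G w (- fibre_top (- w)).
  by rewrite -[w in G w _]opprK; apply/G_sym/G_fibre_top; rewrite normsqN.
have := G_convex (G_fibre_top w_r) G_low (l := 1 / 2).
have -> : 1 / 2 *: w + (1 - 1 / 2) *: w = w by rewrite -scalerDl addrC subrK scale1r.
have -> : 1 / 2 * fibre_top w + (1 - 1 / 2) * - fibre_top (- w) = fibre_mid w.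
  by rewrite /fibre_mid; field.
by apply; exact: half_itv01.
Qed.

Lemma fibre_mid_continuous w : enorm w < r -> {for w, continuous fibre_mid}.
Proof.
have top_cont w1 : enorm w1 < r -> {for w1, continuous fibre_top}.
  apply: concave_disc_continuous; [exact: fibre_top_concave | exact: fibre_top_bounded].
move=> w_r; apply: cvgM; last exact: cvg_cst.
apply: cvgB; first exact: top_cont.
apply: continuous_comp; first exact: opp_continuous.
by apply: top_cont; rewrite enormN.
Qed.

(* The heights fibre_mid at the three vertices of an inscribed equilateral
   triangle sum to an odd function of the vertex w; follow w along a sixth of
   the circle, to - rot120 (rot120 w), where the sum changes sign. *)
Lemma balanced_triangle rho : 0 < rho < r -> exists w, normsq w = rho ^+ 2 /\
  fibre_mid w + fibre_mid (rot120 w) + fibre_mid (rot120 (rot120 w)) = 0.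
Proof.
move=> /andP [rho0 rho_r].
pose g t := let w := circle rho t in
  fibre_mid w + fibre_mid (rot120 w) + fibre_mid (rot120 (rot120 w)).
have circle_cont : continuous (circle rho) by exact: circle_continuous.
have rot_cont (c : R -> R * R) : continuous c -> continuous (fun t => rot120 (c t)).
  by move=> cc t; apply: continuous_comp; [exact: cc | exact: rot120_continuous].
have mid_cont (c : R -> R * R) : continuous c -> (forall t, normsq (c t) = rho ^+ 2) ->
    continuous (fun t => fibre_mid (c t)).
  move=> cc c_rho t; apply: continuous_comp; first exact: cc.
  by apply: fibre_mid_continuous; rewrite /enorm c_rho sqrtr_sqr ger0_norm // ltW.
have gc : continuous g.
  have c0 := mid_cont _ circle_cont (normsq_circle rho).
  have c1 := mid_cont _ (rot_cont _ circle_cont).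
  have c2 := mid_cont _ (rot_cont _ (rot_cont _ circle_cont)).
  move=> t; apply: cvgD; [apply: cvgD|]; [exact: c0 | apply: c1 | apply: c2] => s.
    by rewrite normsq_rot120 normsq_circle.
  by rewrite !normsq_rot120 normsq_circle.
have g_opp : g (s3 / 3) = - g 0.
  by rewrite /g circle_s3 circle0 !rot120N !rot120K !fibre_midN; ring.
have [|c _ gc0] := ivt_opp_ends _ (continuous_subspaceT gc) g_opp.
  by rewrite divr_ge0 // ltW // s3_gt0.
by exists (circle rho c); rewrite normsq_circle.
Qed.

End Fibre.

(** * Sections of symmetric convex bodies from projections *)

Section SymmetricConvex.
Variable R : realType.
Local Notation V := 'rV[R]_3.
Variable K : set V.
Hypothesis convK : convex3 K.
Hypothesis symK : origin_symmetric K.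

Lemma sym_oppr x : K x -> K (- x).
Proof. by move=> Kx; rewrite symK; exists x. Qed.

Lemma sym_convex_comb x y p q : K x -> K y -> 0 <= p -> 0 <= q -> p + q <= 1 ->
  K (p *: x + q *: y).
Proof.
move=> Kx Ky p0 q0 pq1.
have K0 : K 0.
  have -> : 0 = 1 / 2 *: x + (1 - 1 / 2) *: - x by apply/rowP => i; rewrite !mxE; field.
  by apply: (convK Kx (sym_oppr Kx)); exact: half_itv01.
have [pq0 | pq_neq0] := eqVneq (p + q) 0.
  have [-> ->] : p = 0 /\ q = 0 by split; lra.
  by rewrite !scale0r addr0.
have pq_gt0 : 0 < p + q by rewrite lt_def pq_neq0 addr_ge0.
have Kxy : K ((p / (p + q)) *: x + (1 - p / (p + q)) *: y).
  apply: convK => //; apply/andP; split; first by rewrite divr_ge0 ?addr_ge0.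
  by rewrite ler_pdivrMr // mul1r lerDl.
have -> : p *: x + q *: y =
    (p + q) *: (p / (p + q) *: x + (1 - p / (p + q)) *: y) + (1 - (p + q)) *: 0.
  by apply/rowP => i; rewrite !mxE; field.
by apply: convK; rewrite // pq1 ltW.
Qed.

(* The ellipse lies in the hexagon with vertices +-q0, +-q2, +-(q0 + q2). *)
Lemma hexagon_ellipse q0 q2 a b : K q0 -> K q2 -> K (- (q0 + q2)) ->
  a ^+ 2 - a * b + b ^+ 2 <= 3 / 4 -> K (a *: q0 + b *: q2).
Proof.
move=> K0 K2 K4; wlog b0 : a b / 0 <= b => [hwlog ab_le|].
  have [b0 | b_lt0] := lerP 0 b; first exact: hwlog.
  have -> : a *: q0 + b *: q2 = - ((- a) *: q0 + (- b) *: q2).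
    by apply/rowP => i; rewrite !mxE; ring.
  apply/sym_oppr/hwlog; first by rewrite oppr_ge0 ltW.
  by rewrite !sqrrN mulrNN.
move=> ab_le.
have le1 (x : R) : x ^+ 2 <= 1 -> x <= 1 by move=> ?; nra.
have b1 : b <= 1 by apply: le1; have := sqr_ge0 (a - b / 2); lra.
have a1 : a <= 1 by apply: le1; have := sqr_ge0 (b - a / 2); lra.
have ab1 : b - a <= 1 by apply: le1; have := sqr_ge0 (a + b); lra.
have K02 : K (q0 + q2) by rewrite -[q0 + q2]opprK; exact: sym_oppr.
have [a0 | a_lt0] := lerP 0 a; last first.
  have -> : a *: q0 + b *: q2 = (- a) *: - q0 + b *: q2.
    by apply/rowP => i; rewrite !mxE; ring.
  by apply: sym_convex_comb; [exact: sym_oppr | done | lra | done | lra].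
have [ba | ab] := lerP b a.
  have -> : a *: q0 + b *: q2 = b *: (q0 + q2) + (a - b) *: q0.
    by apply/rowP => i; rewrite !mxE; ring.
  by apply: sym_convex_comb => //; lra.
have -> : a *: q0 + b *: q2 = a *: (q0 + q2) + (b - a) *: q2.
  by apply/rowP => i; rewrite !mxE; ring.
by apply: sym_convex_comb => //; lra.
Qed.

Lemma hexagon_disc q0 q2 rho : 0 < rho -> K q0 -> K q2 -> K (- (q0 + q2)) ->
  (forall a b, rho ^+ 2 * (a ^+ 2 - a * b + b ^+ 2) <=
     dot3 (a *: q0 + b *: q2) (a *: q0 + b *: q2)) ->
  section_disc_radii K (rho * s3 / 2).
Proof.
move=> rho0 K0 K2 K4 low; have rho2 : 0 < rho ^+ 2 by rewrite exprn_gt0.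
set g00 := dot3 q0 q0; set g02 := dot3 q0 q2; set g22 := dot3 q2 q2.
have low' a b : rho ^+ 2 * (a ^+ 2 - a * b + b ^+ 2) <=
    a ^+ 2 * g00 + 2 * a * b * g02 + b ^+ 2 * g22 by rewrite -dot3_comb.
have g00_gt0 : 0 < g00 by have := low' 1 0; nra.
have gram_gt0 : 0 < g00 * g22 - g02 ^+ 2.
  have q_gt0 : 0 < g02 ^+ 2 - g02 * - g00 + (- g00) ^+ 2.
    have : 0 < g00 ^+ 2 by rewrite exprn_gt0.
    by have := sqr_ge0 (g02 + g00 / 2); lra.
  rewrite -(pmulr_rgt0 _ g00_gt0).
  by have := mulr_gt0 rho2 q_gt0; have := low' g02 (- g00); lra.
have [u [v [uv uv_span]]] := gram_schmidt2 g00_gt0 gram_gt0.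
split; first by rewrite divr_ge0 ?mulr_ge0 ?ltW ?s3_gt0.
exists u, v, 0; split => // a b ab_le; rewrite add0r.
have [c [d cd]] := uv_span a b; rewrite cd.
have norm_cd : dot3 (c *: q0 + d *: q2) (c *: q0 + d *: q2) = a ^+ 2 + b ^+ 2.
  by case: uv => uu [vv uv0]; rewrite -cd dot3_comb uu vv uv0; ring.
have r34 : (rho * s3 / 2) ^+ 2 = rho ^+ 2 * (3 / 4).
  by rewrite expr_div_n exprMn s3_sqr; field.
apply: hexagon_ellipse => //; rewrite -(ler_pM2l rho2).
by have := low c d; rewrite norm_cd r34 in ab_le *; lra.
Qed.
End SymmetricConvex.

Section Lift.
Variable R : realType.
Local Notation V := 'rV[R]_3.
Variables u v : V.
Hypothesis uv : orthonormal2 u v.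

Definition lift (w : R * R) (t : R) : V := w.1 *: u + w.2 *: v + t *: cross u v.

Lemma lift_comb l m w w' t t' :
  lift (l *: w + m *: w') (l * t + m * t') = l *: lift w t + m *: lift w' t'.
Proof. by rewrite /lift add_pairE !scale_pairE; apply/rowP => i; rewrite !mxE /=; ring. Qed.

Lemma liftD w w' t t' : lift (w + w') (t + t') = lift w t + lift w' t'.
Proof. by rewrite /lift add_pairE; apply/rowP => i; rewrite !mxE /=; ring. Qed.

Lemma lift0 : lift 0 0 = 0.
Proof. by apply/rowP => i; rewrite !mxE /=; ring. Qed.

Lemma liftN w t : lift (- w) (- t) = - lift w t.
Proof. by rewrite /lift opp_pairE; apply/rowP => i; rewrite !mxE /=; ring. Qed.

Lemma lift_continuous w : continuous (lift w).
Proof.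
by move=> t; apply: cvgD; [exact: cvg_cst | apply: cvgZ; [exact: cvg_id | exact: cvg_cst]].
Qed.

Lemma dot3_lift_u w t : dot3 (lift w t) u = w.1.
Proof.
case: uv => uu [_ uv0].
by rewrite !dot3Dl !dot3Zl uu (dot3C v) uv0 dot3_cross_l; ring.
Qed.

Lemma dot3_lift_v w t : dot3 (lift w t) v = w.2.
Proof.
case: uv => _ [vv uv0].
by rewrite !dot3Dl !dot3Zl vv uv0 dot3_cross_r; ring.
Qed.

Lemma dot3_lift_cross w t : dot3 (lift w t) (cross u v) = t.
Proof.
rewrite !dot3Dl !dot3Zl orthonormal2_cross // (dot3C u) (dot3C v).
by rewrite dot3_cross_l dot3_cross_r; ring.
Qed.

Lemma dot3_lift w t : dot3 (lift w t) (lift w t) = normsq w + t ^+ 2.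
Proof. by rewrite (orthonormal2_parseval uv) dot3_lift_u dot3_lift_v dot3_lift_cross. Qed.

Lemma lift_dot3 x : x = lift (dot3 x u, dot3 x v) (dot3 x (cross u v)).
Proof. exact: orthonormal2_decomp. Qed.

End Lift.

Section ProjectionToSection.
Variable R : realType.
Local Notation V := 'rV[R]_3.
Variables (K : set V) (u v : V) (B r p q : R).
Hypotheses (cK : compact K) (convK : convex3 K) (symK : origin_symmetric K).
Hypothesis uv : orthonormal2 u v.
Hypothesis K_bounded : forall x, K x -> dot3 x x <= B.
Hypothesis proj_disc : forall a b, (a - p) ^+ 2 + (b - q) ^+ 2 <= r ^+ 2 ->
  exists x, K x /\ dot3 x u = a /\ dot3 x v = b.

Definition lift_fibre w t := K (lift u v w t).

Lemma lift_fibre_convex w w' t t' l : lift_fibre w t -> lift_fibre w' t' -> 0 <= l <= 1 ->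
  lift_fibre (l *: w + (1 - l) *: w') (l * t + (1 - l) * t').
Proof. by move=> Kwt Kwt' l01; rewrite /lift_fibre lift_comb; apply: convK. Qed.

Lemma lift_fibre_sym w t : lift_fibre w t -> lift_fibre (- w) (- t).
Proof. by move=> Kwt; rewrite /lift_fibre liftN; exact: sym_oppr. Qed.

Lemma lift_fibre_bounded w t : lift_fibre w t -> `|t| <= B + 1.
Proof.
move=> /K_bounded; rewrite dot3_lift // => le_B.
have t2 : `|t| ^+ 2 <= B by rewrite real_normK ?num_real //; have := normsq_ge0 w; lra.
by have := sqr_ge0 (`|t| - 1); have := sqr_ge0 `|t|; lra.
Qed.

Lemma lift_fibre_closed w : closed [set t | lift_fibre w t].
Proof.
apply: (closed_comp (f := lift u v w)) => [t _|]; first exact: lift_continuous.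
exact: compact_closed (@norm_hausdorff _ _) cK.
Qed.

Lemma lift_fibre_proj w : normsq w <= r ^+ 2 -> exists t, lift_fibre w t.
Proof.
move=> w_r.
have [x1 [Kx1 [x1u x1v]]] : exists x, K x /\ dot3 x u = p + w.1 /\ dot3 x v = q + w.2.
  by apply: proj_disc; rewrite [p + _]addrC [q + _]addrC !addrK.
have [x2 [Kx2 [x2u x2v]]] : exists x, K x /\ dot3 x u = p - w.1 /\ dot3 x v = q - w.2.
  by apply: proj_disc; rewrite [p - _]addrC [q - _]addrC !addrK !sqrrN.
set y := 1 / 2 *: x1 + (1 - 1 / 2) *: - x2.
have Ky : K y.
  by apply: (convK Kx1 (sym_oppr symK Kx2)); exact: half_itv01.
have yu : dot3 y u = w.1 by rewrite /y dot3Dl !dot3Zl dot3Nl x1u x2u; field.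
have yv : dot3 y v = w.2 by rewrite /y dot3Dl !dot3Zl dot3Nl x1v x2v; field.
exists (dot3 y (cross u v)).
by rewrite /lift_fibre [w]surjective_pairing -yu -yv -lift_dot3.
Qed.

Lemma section_of_projection rho : 0 < rho < r -> section_disc_radii K (rho * s3 / 2).
Proof.
move=> rho_r; have rho0 : 0 < rho by case/andP: rho_r.
have [w [w_rho mid0]] := balanced_triangle lift_fibre_convex lift_fibre_bounded
  lift_fibre_closed lift_fibre_proj rho_r.
set m := fibre_mid lift_fibre in mid0.
have Km w1 : normsq w1 = rho ^+ 2 -> lift_fibre w1 (m w1).
  move=> w1_rho; have := G_fibre_mid lift_fibre_convex lift_fibre_sym
    lift_fibre_bounded lift_fibre_closed lift_fibre_proj; apply.
  by rewrite w1_rho; case/andP: rho_r => ? ?; nra.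
have w'_rho := normsq_rot120 w; rewrite w_rho in w'_rho.
have w''_rho := normsq_rot120 (rot120 w); rewrite w'_rho in w''_rho.
apply: (hexagon_disc convK symK rho0 (Km _ w_rho) (Km _ w'_rho)).
  have -> : - (lift u v w (m w) + lift u v (rot120 w) (m (rot120 w))) =
      lift u v (rot120 (rot120 w)) (m (rot120 (rot120 w))).
    apply/eqP; rewrite eq_sym -addr_eq0 addrC -!liftD.
    by rewrite rot120_sum mid0 lift0.
  exact: Km.
move=> a b; rewrite -lift_comb dot3_lift // normsq_rot120_comb w_rho.
by rewrite mulrC lerDl sqr_ge0.
Qed.
End ProjectionToSection.

Section Inequality.
Variable R : realType.
Local Notation V := 'rV[R]_3.
Implicit Types K : set V.

Lemma compact_dot3_bounded K : compact K -> exists B, forall x, K x -> dot3 x x <= B.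
Proof.
move=> cK; have K_bd : \forall M \near +oo, forall x, K x -> `|x| <= M.
  exact: compact_bounded.
have [M KM] := filter_ex K_bd.
exists (3 * M ^+ 2) => x /KM x_M.
have entry_sqr i : x 0 i * x 0 i <= M ^+ 2.
  have : `|x 0 i| <= M.
    apply: le_trans x_M.
    by have := le_bigmax 0 (fun ij : 'I_1 * 'I_3 => `|x ij.1 ij.2|) (0, i); rewrite -mx_normrE.
  by rewrite ler_norml => /andP [? ?]; nra.
by rewrite dot3E; have := entry_sqr i0; have := entry_sqr i1; have := entry_sqr i2; lra.
Qed.

Lemma section_disc_radii_bounded K B : (forall x, K x -> dot3 x x <= B) ->
  forall s, section_disc_radii K s -> s <= B + 1.
Proof.
move=> K_B s [s0 [u [v [c [[uu _] disc]]]]].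
have K1 := disc s 0 ltac:(by rewrite expr0n /= addr0).
have K2 := disc (- s) 0 ltac:(by rewrite sqrrN expr0n /= addr0).
set x1 := c + s *: u + 0 *: v in K1; set x2 := c + (- s) *: u + 0 *: v in K2.
have par : dot3 (x1 - x2) (x1 - x2) + dot3 (x1 + x2) (x1 + x2) =
    2 * dot3 x1 x1 + 2 * dot3 x2 x2 by rewrite !dot3E !mxE; ring.
have diff : x1 - x2 = (2 * s) *: u by apply/rowP => i; rewrite !mxE; ring.
rewrite diff dot3Zl dot3Zr uu in par.
have := K_B _ K1; have := K_B _ K2; have := dot3_ge0 (x1 + x2).
by have := sqr_ge0 (s - 1); have := sqr_ge0 s; lra.
Qed.

Lemma rt2_le_r2 K : convex_body K -> origin_symmetric K -> 0 < r2 K ->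
  rt2 K / r2 K <= 2 / Num.sqrt 3.
Proof.
case=> cK convK symK r2_gt0; have [B K_B] := compact_dot3_bounded cK.
have sec_sup : has_sup (section_disc_radii K).
  split; last by exists (B + 1) => s; exact: section_disc_radii_bounded.
  by apply/set0P/negP => /eqP K0; move: r2_gt0; rewrite /r2 K0 sup0 ltxx.
have s3_gt0 : 0 < s3 :> R := s3_gt0 R.
have k_ge0 : 0 <= 2 / s3 :> R by rewrite divr_ge0 ?ltW.
have proj_le t : projection_disc_radii K t -> t <= 2 / s3 * r2 K.
  move=> [t0 [u [v [uv [p [q disc]]]]]]; apply/unstable.ler_ltP => z z_lt.
  have [z0 | z_gt0] := lerP z 0; first exact: le_trans z0 (mulr_ge0 k_ge0 (ltW r2_gt0)).
  have zE : z = 2 / s3 * (z * s3 / 2) by field; rewrite gt_eqF.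
  rewrite zE ler_wpM2l //; apply: sup_upper_bound sec_sup _ _.
  by apply: (section_of_projection cK convK symK uv K_B disc); rewrite z_gt0.
rewrite ler_pdivrMr //.
have [P0 | P_neq0] := eqVneq (projection_disc_radii K) set0.
  by rewrite /rt2 P0 sup0 mulr_ge0 ?ltW.
by apply: ge_sup; [exact/set0P | exact: proj_le].
Qed.
End Inequality.

(** * The cube *)

Lemma sup_max (R : realType) (A : set R) x : A x -> ubound A x -> sup A = x.
Proof.
move=> Ax ubx; apply/eqP; rewrite eq_le ge_sup //=; last by exists x.
by apply: sup_upper_bound => //; split; exists x.
Qed.

Section Cube.
Variable R : realType.
Local Notation V := 'rV[R]_3.

Definition cube : set V := [set x | forall i, `[-1, 1] (x 0 i)].

Lemma cubeP x : cube x <-> forall i, -1 <= x 0 i <= 1.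
Proof. by split => x_cube i; move: (x_cube i); rewrite /= in_itv. Qed.

Lemma cube_compact : compact cube.
Proof.
have := @rV_compact R 3 (fun=> `[-1, 1]) (fun=> @segment_compact R (-1) 1).
by rewrite /cube.
Qed.

Lemma cube_convex : convex3 cube.
Proof.
move=> x y /cubeP x_cube /cubeP y_cube t /andP [t0 t1]; apply/cubeP => i.
move: (x_cube i) (y_cube i); rewrite !mxE => /andP [? ?] /andP [? ?].
by apply/andP; split; nra.
Qed.

Lemma cube_sym : origin_symmetric cube.
Proof.
have cubeN x : cube x -> cube (- x).
  move=> /cubeP x_cube; apply/cubeP => i; move: (x_cube i).
  by rewrite mxE => /andP [? ?]; apply/andP; split; lra.
apply/seteqP; split => [x x_cube | _ [x x_cube <-]]; last exact: cubeN.
by exists (- x); rewrite ?opprK //; exact: cubeN.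
Qed.

Definition s2 : R := Num.sqrt 2.

Lemma s2_gt0 : 0 < s2.
Proof. by rewrite sqrtr_gt0. Qed.

Lemma s2_sqr : s2 ^+ 2 = 2.
Proof. by rewrite sqr_sqrtr. Qed.

Lemma sqr_le1 (x : R) : x ^+ 2 <= 1 -> -1 <= x <= 1.
Proof. by move=> x2; apply/andP; split; nra. Qed.

Let k : R := 1 / s2.
Let m : R := 1 / (s2 * s3).

Lemma k_sqr : k ^+ 2 = 1 / 2.
Proof. by rewrite /k expr_div_n s2_sqr expr1n. Qed.

Lemma m_sqr : m ^+ 2 = 1 / 6.
Proof. by rewrite /m expr_div_n exprMn s2_sqr s3_sqr expr1n; field. Qed.

(* An orthonormal basis of the plane x + y + z = 0. *)
Definition cube_u : V := row3 k (- k) 0.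
Definition cube_v : V := row3 m m (- (2 * m)).

Lemma orthonormal2_cube : orthonormal2 cube_u cube_v.
Proof.
have := k_sqr; have := m_sqr; rewrite /orthonormal2 !dot3E !mxE /=.
by split; [|split]; nra.
Qed.

Lemma cube_section_disc : section_disc_radii cube (s3 / s2).
Proof.
have r_sqr : (s3 / s2) ^+ 2 = 3 / 2 by rewrite expr_div_n s3_sqr s2_sqr.
split; first by rewrite divr_ge0 ?ltW ?s3_gt0 ?s2_gt0.
exists cube_u, cube_v, 0; split; first exact: orthonormal2_cube.
move=> a b; rewrite r_sqr => ab_le; apply/cubeP; apply: ord3P; rewrite !mxE /= add0r;
  apply: sqr_le1; have := k_sqr; have := m_sqr => m2 k2.
- by have := cauchy_schwarz2 a b k m; rewrite k2 m2; nra.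
- by have := cauchy_schwarz2 a b (- k) m; rewrite sqrrN k2 m2; nra.
- by have := cauchy_schwarz2 a b 0 (- (2 * m)); rewrite sqrrN exprMn m2; nra.
Qed.

Lemma cube_disc_coord (u v c : V) s i : 0 <= s ->
    (forall a b, a ^+ 2 + b ^+ 2 <= s ^+ 2 -> cube (c + a *: u + b *: v)) ->
  s ^+ 2 * (u 0 i ^+ 2 + v 0 i ^+ 2) <= 1.
Proof.
move=> s0 disc; set n := u 0 i ^+ 2 + v 0 i ^+ 2.
have [n0 | n_neq0] := eqVneq n 0; first by rewrite n0 mulr0.
have n_gt0 : 0 < n by rewrite lt_def n_neq0 addr_ge0 ?sqr_ge0.
set sg := Num.sqrt n; have sg_gt0 : 0 < sg by rewrite sqrtr_gt0.
have sg2 : sg ^+ 2 = n by rewrite sqr_sqrtr // ltW.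
set a := s * u 0 i / sg; set b := s * v 0 i / sg.
have ab_s : a ^+ 2 + b ^+ 2 = s ^+ 2.
  by rewrite /a /b !expr_div_n -mulrDl !exprMn -mulrDr -/n -sg2; field; rewrite gt_eqF.
have ab_le : a ^+ 2 + b ^+ 2 <= s ^+ 2 by rewrite ab_s.
have /cubeP /(_ i) := disc a b ab_le.
have /cubeP /(_ i) : cube (c + (- a) *: u + (- b) *: v) by apply: disc; rewrite !sqrrN.
rewrite !mxE => /andP [? ?] /andP [? ?].
have ab_i : a * u 0 i + b * v 0 i = s * sg.
  transitivity (s * sg ^+ 2 / sg); first by rewrite sg2 /a /b /n; field; rewrite gt_eqF.
  by field; rewrite gt_eqF.
have ssg1 : s * sg <= 1 by lra.
have ssg0 : 0 <= s * sg by rewrite mulr_ge0 // ltW.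
by rewrite -sg2 -exprMn; nra.
Qed.

Lemma cube_section_radius_le s : section_disc_radii cube s -> s <= s3 / s2.
Proof.
move=> [s0 [u [v [c [[uu [vv _]] disc]]]]].
have := cube_disc_coord i0 s0 disc; have := cube_disc_coord i1 s0 disc.
have := cube_disc_coord i2 s0 disc; move: uu vv; rewrite !dot3E => uu vv h2 h1 h0.
have s_sqr : s ^+ 2 <= (s3 / s2) ^+ 2 by rewrite expr_div_n s3_sqr s2_sqr; nra.
by rewrite -(ler_pXn2r (n := 2)) // nnegrE divr_ge0 // ltW ?s3_gt0 ?s2_gt0.
Qed.

Lemma cube_projection_radius_le t : projection_disc_radii cube t -> t <= s2.
Proof.
move=> [t0 [u [v [[uu [vv uv]] [p [q disc]]]]]].
have [a [b [ab1 ab_perp]]] := exists_unit_orthogonal (u 0 i2) (v 0 i2).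
have [x1 [cube_x1 [x1u x1v]]] := disc (p + t * a) (q + t * b)
  ltac:(by rewrite [p + _]addrC [q + _]addrC !addrK !exprMn -mulrDr ab1 mulr1).
have [x2 [cube_x2 [x2u x2v]]] := disc (p - t * a) (q - t * b)
  ltac:(by rewrite [p - _]addrC [q - _]addrC !addrK !sqrrN !exprMn -mulrDr ab1 mulr1).
set d := x1 - x2; set w := a *: u + b *: v.
have dw : dot3 d w = 2 * t.
  rewrite /d /w dot3Dr !dot3Zr !dot3Bl x1u x2u x1v x2v.
  by transitivity (2 * t * (a ^+ 2 + b ^+ 2)); [ring | rewrite ab1 mulr1].
have ww : dot3 w w = 1 by rewrite /w dot3_comb uu vv uv; lra.
have w2 : w 0 i2 = 0 by rewrite /w !mxE.
move: dw ww; rewrite !dot3E w2 !mulr0 !addr0 => dw ww.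
have d_sqr j : d 0 j ^+ 2 <= 4.
  move/cubeP: cube_x1 => /(_ j); move/cubeP: cube_x2 => /(_ j).
  by rewrite /d !mxE => /andP [? ?] /andP [? ?]; nra.
have := cauchy_schwarz2 (d 0 i0) (d 0 i1) (w 0 i0) (w 0 i1).
rewrite -!expr2 in ww; rewrite dw ww mulr1; have := d_sqr i0; have := d_sqr i1 => ? ? t_sqr.
have t_s2 : t ^+ 2 <= s2 ^+ 2 by rewrite s2_sqr; lra.
by rewrite -(ler_pXn2r (n := 2)) // nnegrE ltW // s2_gt0.
Qed.

Lemma cube_projection_disc : projection_disc_radii cube s2.
Proof.
split; first exact: ltW s2_gt0.
exists cube_u, cube_v; split; first exact: orthonormal2_cube.
exists 0, 0 => a b; rewrite !subr0 s2_sqr => ab_le.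
have k2 := k_sqr; have m2 := m_sqr.
pose x1 := k * a + m * b; pose x2 := - k * a + m * b; pose x3 := - (2 * m) * b.
have d12 : (x1 - x2) ^+ 2 <= 4.
  have -> : x1 - x2 = 2 * (k * a) by rewrite /x1 /x2; ring.
  by rewrite (exprMn _ 2) (exprMn _ k) k2; have := sqr_ge0 b; lra.
have d13 : (x1 - x3) ^+ 2 <= 4.
  have -> : x1 - x3 = a * k + b * (3 * m) by rewrite /x1 /x3; ring.
  by have := cauchy_schwarz2 a b k (3 * m); rewrite (exprMn _ 3) k2 m2; lra.
have d23 : (x2 - x3) ^+ 2 <= 4.
  have -> : x2 - x3 = a * (- k) + b * (3 * m) by rewrite /x2 /x3; ring.
  by have := cauchy_schwarz2 a b (- k) (3 * m); rewrite sqrrN (exprMn _ 3) k2 m2; lra.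
(* Shift x by the common point tau of the intervals [-1 - x_i, 1 - x_i],
   which pairwise meet; (1, 1, 1) is orthogonal to cube_u and cube_v. *)
pose tau := Num.max (-1 - x1) (Num.max (-1 - x2) (-1 - x3)).
have le2 (y : R) : y ^+ 2 <= 4 -> -2 <= y <= 2 by move=> ?; apply/andP; split; nra.
move: d12 d13 d23 => /le2/andP [? ?] /le2/andP [? ?] /le2/andP [? ?].
have tau_ge : [/\ -1 - x1 <= tau, -1 - x2 <= tau & -1 - x3 <= tau].
  by split; rewrite !le_max lexx ?orbT.
have tau_le y : -1 - x1 <= 1 - y -> -1 - x2 <= 1 - y -> -1 - x3 <= 1 - y -> tau <= 1 - y.
  by move=> ? ? ?; rewrite !ge_max; apply/andP; split; [|apply/andP; split].
case: tau_ge => ? ? ?.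
exists (row3 (x1 + tau) (x2 + tau) (x3 + tau)); split; last split.
- apply/cubeP; apply: ord3P; rewrite mxE /=; apply/andP; split; try lra.
  + by rewrite -lerBrDl tau_le //; lra.
  + by rewrite -lerBrDl tau_le //; lra.
  + by rewrite -lerBrDl tau_le //; lra.
- by rewrite dot3E !mxE /= /x1 /x2; transitivity (2 * k ^+ 2 * a); [ring | rewrite k2; field].
- rewrite dot3E !mxE /= /x1 /x2 /x3.
  by transitivity (6 * m ^+ 2 * b); [ring | rewrite m2; field].
Qed.

Lemma r2_cube : r2 cube = s3 / s2.
Proof. exact: sup_max cube_section_disc cube_section_radius_le. Qed.

Lemma rt2_cube : rt2 cube = s2.
Proof. exact: sup_max cube_projection_disc cube_projection_radius_le. Qed.

Lemma cube_extremal : [/\ convex_body cube, origin_symmetric cube, 0 < r2 cube &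
  rt2 cube / r2 cube = 2 / Num.sqrt 3].
Proof.
have := s2_gt0; have := s3_gt0 R => s3_gt0 s2_gt0.
split; [split | | |]; rewrite ?r2_cube ?rt2_cube.
- exact: cube_compact.
- exact: cube_convex.
- exact: cube_sym.
- by rewrite divr_gt0.
- by rewrite -[Num.sqrt 3]/(s3 : R) -s2_sqr; field; rewrite !gt_eqF.
Qed.

End Cube.

Theorem theorem2p2 (R : realType) :
  (forall K : set 'rV[R]_3,
      convex_body K -> origin_symmetric K -> 0 < r2 K ->
      rt2 K / r2 K <= 2 / Num.sqrt 3) /\
  (exists K : set 'rV[R]_3,
      [/\ convex_body K, origin_symmetric K, 0 < r2 K &
          rt2 K / r2 K = 2 / Num.sqrt 3]).
Proof.
split; first exact: rt2_le_r2.
by exists (@cube R); exact: cube_extremal.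
Qed.
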